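(* Fix an integer $r\ge1$. For $\ell\ge2$ with $r<2^{\ell-1}$ (so that $r<q/2$ for $q=2^\ell$), the sets $S_t(\cdot)$ defined below satisfy $$|S_0(\ell)|=3|S_0(\ell-1)|+|S_1(\ell-1)|,\quad |S_1(\ell)|=|S_0(\ell-1)|+|S_1(\ell-1)|+|S_2(\ell-1)|,\quad |S_2(\ell)|=|S_2(\ell-1)|.$$
   Context: For $\ell\ge1$, $Q=2^\ell$ and an integer $t\ge0$, $S_t(\ell)$ is the set of pairs $(a,b)$ of integers with $0\le a,b\le Q-1$ for which there exist integers $i,j\ge0$ with $i\le_2 b$, $j\le_2 b-i$ and $2i+j+a=Q-r'+tQ$ for some $r'\in\{1,\dots,r\}$. Here $u\le_2 w$ means every binary digit of $u$ is at most the corresponding binary digit of $w$. *)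

From mathcomp Require Import all_boot.
From mathcomp Require Import boolp.
Set Implicit Arguments.
Unset Strict Implicit.
Unset Printing Implicit Defensive.

Definition bitn (k u : nat) : bool := odd (u %/ 2 ^ k).

Definition le2 (u w : nat) : Prop := forall k : nat, (bitn k u <= bitn k w)%N.

(* Membership of (a,b) in S_t(l) for the fixed parameter r (Q = 2^l).
   The condition 2i+j+a = Q - r' + tQ is written additively as
   2i+j+a+r' = Q + tQ to avoid truncated subtraction. *)
Definition inS (r t l a b : nat) : Prop :=
  exists i j : nat, le2 i b /\ le2 j (b - i) /\
    exists r' : nat, [/\ (1 <= r')%N, (r' <= r)%N &
      2 * i + j + a + r' = 2 ^ l + t * 2 ^ l].

Definition S (r t l : nat) : {set 'I_(2 ^ l) * 'I_(2 ^ l)} :=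
  [set p | `[< inS r t l (val p.1) (val p.2) >] ].

From mathcomp Require Import all_boot boolp zify.

(* Write [a = qa * 2^n + a'] and [b = qb * 2^n + b'] with [a', b' < 2^n].
   The numbers [2i + j] with [i <=_2 b] and [j <=_2 b - i] are exactly the
   [c * 2^n + s'] with [c <= 2 qb] and [s'] such a number for [b'].  Hence,
   when [r < 2^n], the pair [(a, b)] lies in [S_t(n+1)] iff [(a', b')] lies in
   [S_u(n)] with [u = max(0, 2t + 1 - qa - 2 qb)]; the truncation is harmless
   because [S_u(n)] decreases in [u].  As [S_u(n)] is empty for [u >= 3],
   summing over the four quadrants [(qa, qb)] gives the three recurrences. *)

Lemma bitn_small k u : u < 2 ^ k -> bitn k u = false.
Proof. by move=> lt_u; rewrite /bitn divn_small. Qed.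

Lemma bitn_addX m k (q : bool) u : u < 2 ^ m ->
  bitn k (q * 2 ^ m + u) = ((k < m) && bitn k u) || ((k == m) && q).
Proof.
move=> lt_u; case: (ltngtP k m) => [lt_km | lt_mk | ->] /=.
- have -> : 2 ^ m = 2 ^ (m - k) * 2 ^ k by rewrite -expnD subnK // ltnW.
  rewrite /bitn mulnA divnMDl ?expn_gt0 // oddD oddM oddX subn_eq0 leqNgt lt_km.
  by rewrite andbF orbF.
- rewrite bitn_small //; apply: (@leq_trans (2 ^ m.+1)); last exact: leq_pexp2l.
  by rewrite expnS; case: q => /=; lia.
- by rewrite /bitn divnMDl ?expn_gt0 // divn_small // addn0 oddb.
Qed.

Lemma le2_addX m (qu qw : bool) u w : u < 2 ^ m -> w < 2 ^ m ->
  le2 (qu * 2 ^ m + u) (qw * 2 ^ m + w) <-> (qu <= qw) /\ le2 u w.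
Proof.
move=> lt_u lt_w; split => [le_uw | [le_q le_uw] k].
- split; first by have := le_uw m; rewrite !bitn_addX // ltnn eqxx.
  move=> k; case: (ltnP k m) => [lt_km | le_mk].
  + by have := le_uw k; rewrite !bitn_addX // lt_km (ltn_eqF lt_km) !orbF.
  + by rewrite bitn_small // (leq_trans lt_u) ?leq_pexp2l.
- rewrite !bitn_addX //; case: (ltngtP k m) => //= _.
  by rewrite !orbF le_uw.
Qed.
Arguments le2_addX {m qu qw u w}.

Lemma ltn_expS_split m u : u < 2 ^ m.+1 ->
  exists (q : bool) u', u' < 2 ^ m /\ u = q * 2 ^ m + u'.
Proof.
rewrite expnS => lt_u; case: (leqP (2 ^ m) u) => le_u.
- by exists true, (u - 2 ^ m); split; lia.
- by exists false, u; split; lia.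
Qed.
Arguments ltn_expS_split {m u}.

Lemma le2_leq u w : le2 u w -> u <= w.
Proof.
have le2_leq_exp M : forall u w, u < 2 ^ M -> w < 2 ^ M -> le2 u w -> u <= w.
  elim: M => [|M IH] u' w'; first by rewrite expn0; case: u'.
  move=> /ltn_expS_split [qu [{}u' [lt_u ->]]] /ltn_expS_split [qw [{}w' [lt_w ->]]].
  move/(le2_addX lt_u lt_w) => [le_q /(IH _ _ lt_u lt_w) le_uw].
  by case: qu qw le_q => [] [] //=; lia.
apply: (le2_leq_exp (u + w)).
- by apply: leq_trans (ltn_expl u (ltnSn 1)) _; apply: leq_pexp2l => //; lia.
- by apply: leq_trans (ltn_expl w (ltnSn 1)) _; apply: leq_pexp2l => //; lia.
Qed.
Arguments le2_leq {u w}.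

Lemma le2_0n w : le2 0 w.
Proof. by move=> k; rewrite /bitn div0n. Qed.

Definition chain_weight (b s : nat) : Prop :=
  exists i j, [/\ le2 i b, le2 j (b - i) & s = 2 * i + j].

Lemma chain_weight_leq b s : chain_weight b s -> s <= 2 * b.
Proof. by move=> [i [j [/le2_leq le_ib /le2_leq le_j ->]]]; lia. Qed.
Arguments chain_weight_leq {b s}.

Lemma chain_weight0 b : chain_weight b 0.
Proof. by exists 0, 0; split=> //; apply: le2_0n. Qed.

Lemma subn_addX m (qb qi : bool) b i : qi <= qb -> i <= b ->
  (qb * 2 ^ m + b) - (qi * 2 ^ m + i) = (qb && ~~ qi) * 2 ^ m + (b - i).
Proof. by case: qb; case: qi => //= _; lia. Qed.

Lemma chain_weight_addX m (qb : bool) b s : b < 2 ^ m ->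
  chain_weight (qb * 2 ^ m + b) s <->
  exists c s', [/\ c <= 2 * qb, chain_weight b s' & s = c * 2 ^ m + s'].
Proof.
move=> lt_b; split.
- move=> [i [j [le_i le_j ->]]].
  have /ltn_expS_split [qi [i' [lt_i Ei]]] : i < 2 ^ m.+1.
    by have := le2_leq le_i; rewrite expnS; case: (qb) => /=; lia.
  subst i; have [le_q le_ib] := (le2_addX lt_i lt_b).1 le_i.
  rewrite subn_addX ?(le2_leq le_ib) // in le_j.
  have lt_bi : b - i' < 2 ^ m by lia.
  have /ltn_expS_split [qj [j' [lt_j Ej]]] : j < 2 ^ m.+1.
    by have := le2_leq le_j; rewrite expnS; case: (qb && ~~ qi) => /=; lia.
  subst j; have [le_qj le_jbi] := (le2_addX lt_j lt_bi).1 le_j.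
  exists (2 * qi + qj), (2 * i' + j'); split; last by lia.
  + by move: le_q le_qj; case: (qb); case: (qi); case: (qj).
  + by exists i', j'.
- move=> [c [_ [le_c [i [j [le_i le_j ->]]] ->]]].
  have lt_i : i < 2 ^ m by have := le2_leq le_i; lia.
  have lt_bi : b - i < 2 ^ m by lia.
  have lt_j : j < 2 ^ m by have := le2_leq le_j; lia.
  have le_q : (c == 2) <= qb by move: le_c; case: (qb); case: c => [|[|[|]]].
  exists ((c == 2) * 2 ^ m + i), ((c == 1) * 2 ^ m + j); split.
  + exact/(le2_addX lt_i lt_b).
  + rewrite subn_addX ?(le2_leq le_i) //; apply/(le2_addX lt_j lt_bi).
    by split => //; move: le_c {le_q}; case: (qb); case: c => [|[|[|]]].
  + by move: le_c {le_q}; case: (qb); case: c => [|[|[|]]] //=; lia.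
Qed.
Arguments chain_weight_addX {m qb b s}.

Lemma chain_weight_subX m b s : b < 2 ^ m -> chain_weight b s -> 2 ^ m <= s ->
  chain_weight b (s - 2 ^ m).
Proof.
elim: m b s => [|m IH] b s.
  by rewrite expn0 => lt_b /chain_weight_leq; case: b lt_b => //; lia.
move=> /ltn_expS_split [qb [{}b [lt_b ->]]].
move=> /(chain_weight_addX lt_b) [c [s' [le_c w_s' ->]]].
have := chain_weight_leq w_s'; rewrite expnS => le_s' le_s.
apply/(chain_weight_addX lt_b).
case: c le_c le_s => [|[|[|c]]] //= le_c le_s; first by lia.
- have le_ms : 2 ^ m <= s' by lia.
  by exists 0, (s' - 2 ^ m); split => //; [exact: IH | lia].
- by exists 0, s'; split => //; lia.
- by case: (qb) le_c.
Qed.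

Definition window (r t Q x : nat) : Prop := (t.+1 * Q <= x + r) /\ (x < t.+1 * Q).

Lemma inS_window r t l a b :
  inS r t l a b <-> exists2 s, chain_weight b s & window r t (2 ^ l) (a + s).
Proof.
rewrite /window mulSn; split.
- move=> [i [j [le_i [le_j [r' [ge_r' le_r' E]]]]]].
  by exists (2 * i + j); [exists i, j | lia].
- move=> [_ [i [j [le_i le_j ->]]] [lb ub]].
  exists i, j; split => //; split => //.
  by exists (2 ^ l + t * 2 ^ l - (a + (2 * i + j))); split; lia.
Qed.

Lemma inS_pred r t n a b : r < 2 ^ n -> a < 2 ^ n -> b < 2 ^ n ->
  inS r t.+1 n a b -> inS r t n a b.
Proof.
move=> lt_r lt_a lt_b /inS_window [s w_s]; rewrite /window !mulSn => -[lb ub].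
apply/inS_window; case: (leqP (2 ^ n) s) => le_s.
- by exists (s - 2 ^ n); [exact: chain_weight_subX | rewrite /window mulSn; lia].
- exists 0; first exact: chain_weight0.
  by rewrite /window mulSn; lia.
Qed.

Lemma inS_mono r u v n a b : r < 2 ^ n -> a < 2 ^ n -> b < 2 ^ n -> u <= v ->
  inS r v n a b -> inS r u n a b.
Proof.
move=> lt_r lt_a lt_b; elim: v => [|v IH]; first by rewrite leqn0 => /eqP ->.
rewrite leq_eqVlt ltnS => /orP [/eqP -> // | le_uv].
by move/inS_pred => /(_ lt_r lt_a lt_b) /IH; apply.
Qed.

Lemma inS_large r u n a b : r < 2 ^ n -> a < 2 ^ n -> b < 2 ^ n -> 3 <= u ->
  ~ inS r u n a b.
Proof.
move=> lt_r lt_a lt_b le3u /inS_window [s /chain_weight_leq le_s [lb _]].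
have : 4 * 2 ^ n <= u.+1 * 2 ^ n by apply: leq_mul => //; lia.
lia.
Qed.

Lemma window_double r t k Q A : 0 < Q -> r < Q -> A < 3 * Q ->
  window r t (2 * Q) (k * Q + A) <-> k <= 2 * t + 1 /\ window r (2 * t + 1 - k) Q A.
Proof.
rewrite /window mulnA => Q_gt0 lt_r lt_A.
have E d : 2 * t + 1 = k + d -> t.+1 * 2 * Q = k * Q + d.+1 * Q.
  by move=> Ed; rewrite (_ : t.+1 * 2 = k + d.+1) ?mulnDl //; lia.
split=> [[lb ub] | [le_k]].
- have le_k : k <= 2 * t + 1.
    rewrite leqNgt; apply/negP => lt_k.
    have : t.+1 * 2 * Q <= k * Q by apply: leq_mul => //; lia.
    lia.
  by move: lb ub; rewrite (E (2 * t + 1 - k)) ?subnKC //; lia.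
- by rewrite (E (2 * t + 1 - k)) ?subnKC //; lia.
Qed.

Lemma inS_quadrant r t n (qa qb : bool) a b : r < 2 ^ n -> a < 2 ^ n -> b < 2 ^ n ->
  inS r t n.+1 (qa * 2 ^ n + a) (qb * 2 ^ n + b) <->
  inS r (2 * t + 1 - qa - 2 * qb) n a b.
Proof.
move=> lt_r lt_a lt_b; have Q_gt0 : 0 < 2 ^ n by rewrite expn_gt0.
have shift c s : (qa * 2 ^ n + a) + (c * 2 ^ n + s) = (qa + c) * 2 ^ n + (a + s).
  by rewrite mulnDl; lia.
split.
- move=> /inS_window [_ /(chain_weight_addX lt_b) [c [s [le_c w_s ->]]]].
  have le_s := chain_weight_leq w_s.
  rewrite expnS shift window_double //; last by lia.
  move=> [le_k w]; apply: (@inS_mono r _ (2 * t + 1 - (qa + c))) => //; first by lia.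
  by apply/inS_window; exists s.
- move=> /inS_window [s w_s w]; have le_s := chain_weight_leq w_s.
  pose c := minn (2 * qb) (2 * t + 1 - qa).
  apply/inS_window; exists (c * 2 ^ n + s).
    by apply/(chain_weight_addX lt_b); exists c, s; split; rewrite ?geq_minl.
  rewrite expnS shift window_double //; last by lia.
  split; first by rewrite /c; case: (qa); lia.
  by move: w; congr window; rewrite /c; case: (qa); lia.
Qed.

Definition nS (r t l : nat) : nat :=
  \sum_(0 <= a < 2 ^ l) \sum_(0 <= b < 2 ^ l) `[< inS r t l a b >].

Lemma card_S r t l : #|S r t l| = nS r t l.
Proof.
rewrite /nS big_mkord.
under eq_bigr do rewrite big_mkord.
rewrite pair_big /= -sum1_card big_mkcond /=; apply: eq_bigr => p _.
by rewrite inE.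
Qed.

Lemma sum_nat_double (G : nat -> nat) N :
  \sum_(0 <= x < 2 * N) G x = \sum_(q : bool) \sum_(0 <= x < N) G (q * N + x).
Proof.
rewrite big_bool (big_cat_nat _ (n := N)) //=; last by lia.
rewrite -{2}(add0n N) big_addn (_ : 2 * N - N = N); last by lia.
rewrite addnC; congr (_ + _); apply: eq_bigr => x _; congr G; lia.
Qed.

Lemma nS_S r t n : r < 2 ^ n ->
  nS r t n.+1 = \sum_(qa : bool) \sum_(qb : bool) nS r (2 * t + 1 - qa - 2 * qb) n.
Proof.
move=> lt_r; rewrite /nS expnS sum_nat_double.
under eq_bigr => qa _ do under eq_bigr => a _ do rewrite sum_nat_double.
under eq_bigr => qa _ do rewrite exchange_big.
apply: eq_bigr => qa _; apply: eq_bigr => qb _.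
apply: eq_big_nat => a /andP [_ lt_a]; apply: eq_big_nat => b /andP [_ lt_b].
by rewrite (asbool_equiv_eq (inS_quadrant r t n qa qb a b lt_r lt_a lt_b)).
Qed.

Lemma nS_large r u n : r < 2 ^ n -> 3 <= u -> nS r u n = 0.
Proof.
move=> lt_r le3u; apply: big1_seq => a /andP [_]; rewrite mem_index_iota => /andP [_ lt_a].
apply: big1_seq => b /andP [_]; rewrite mem_index_iota => /andP [_ lt_b].
by rewrite asboolF //; apply: inS_large.
Qed.

Theorem mainTheorem7 (r l : nat) :
  (1 <= r)%N -> (2 <= l)%N -> (r < 2 ^ (l - 1))%N ->
  [/\ #|S r 0 l| = 3 * #|S r 0 (l - 1)| + #|S r 1 (l - 1)|,
      #|S r 1 l| = #|S r 0 (l - 1)| + #|S r 1 (l - 1)| + #|S r 2 (l - 1)|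
    & #|S r 2 l| = #|S r 2 (l - 1)| ].
Proof.
case: l => [|n] // _ _; rewrite subSS subn0 => lt_r.
rewrite !card_S !nS_S // !big_bool.
change [/\ nS r 0 n + nS r 0 n + (nS r 0 n + nS r 1 n) = 3 * nS r 0 n + nS r 1 n,
  nS r 0 n + nS r 2 n + (nS r 1 n + nS r 3 n) = nS r 0 n + nS r 1 n + nS r 2 n
  & nS r 2 n + nS r 4 n + (nS r 3 n + nS r 5 n) = nS r 2 n].
rewrite !(nS_large r 3 n lt_r) // (nS_large r 4 n lt_r) // (nS_large r 5 n lt_r) //.
by split; lia.
Qed.
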